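(* Let $X=(\mathbb N,\tau_{cof})$ be the natural numbers with the co-finite topology (open sets: $\emptyset$ and complements of finite sets). Then $X$ is a $d$-space and is $s$-well-filtered, the closed Rudin sets of $X$ are exactly $\mathbb N$ and the singletons $\{n\}$, $n\in\mathbb N$, and $X$ is not well-filtered. In particular, an $s$-well-filtered space need not be well-filtered.
   Context: A $T_0$ space $X$ is a $d$-space if $X$ with the specialization order is a dcpo and every open set is Scott open. $Q(X)$ denotes the nonempty compact saturated subsets of $X$; a family of such sets is filtered if nonempty and any two members contain a third member. $X$ is well-filtered if for every open $U$ and filtered $\mathcal K\subseteq Q(X)$, $\bigcap\mathcal K\subseteq U$ implies $K\subseteq U$ for some $K\in\mathcal K$. A set $A$ is strongly compact if for every open $U\supseteq A$ there is a finite $F$ with $A\subseteq\uparrow F\subseteq U$; $Q_s(X)$ is the set of nonempty strongly compact saturated sets, and $X$ is $s$-well-filtered if the well-filtered condition holds for filtered $\mathcal K\subseteq Q_s(X)$. A Rudin set is a nonempty $A$ such that, for some filtered $\mathcal K\subseteq Q(X)$, $\overline A$ is a minimal closed set meeting every member of $\mathcal K$. *)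

From Stdlib Require Import List.
Import ListNotations.

Section Topo.
Variable T : Type.
Variable open : (T -> Prop) -> Prop.

Definition subset (A B : T -> Prop) : Prop := forall x, A x -> B x.

Definition closed (A : T -> Prop) : Prop := open (fun x => ~ A x).

Definition closure (A : T -> Prop) : T -> Prop :=
  fun x => forall C, closed C -> subset A C -> C x.

Definition spec_le (x y : T) : Prop := closure (fun z => z = y) x.

Definition T0 : Prop := forall x y, spec_le x y -> spec_le y x -> x = y.

Definition directed (D : T -> Prop) : Prop :=
  (exists x, D x) /\
  forall x y, D x -> D y -> exists z, D z /\ spec_le x z /\ spec_le y z.

Definition is_sup (D : T -> Prop) (s : T) : Prop :=
  (forall x, D x -> spec_le x s) /\
  (forall u, (forall x, D x -> spec_le x u) -> spec_le s u).

Definition dcpo : Prop := forall D, directed D -> exists s, is_sup D s.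

Definition upper (A : T -> Prop) : Prop := forall x y, A x -> spec_le x y -> A y.

Definition scott_open (U : T -> Prop) : Prop :=
  upper U /\
  forall D s, directed D -> is_sup D s -> U s -> exists d, D d /\ U d.

Definition d_space : Prop :=
  T0 /\ dcpo /\ forall U, open U -> scott_open U.

Definition saturated (A : T -> Prop) : Prop :=
  forall x, (forall U, open U -> subset A U -> U x) -> A x.

Definition compact (A : T -> Prop) : Prop :=
  forall F : (T -> Prop) -> Prop,
    (forall U, F U -> open U) ->
    subset A (fun x => exists U, F U /\ U x) ->
    exists l : list (T -> Prop),
      (forall U, In U l -> F U) /\ subset A (fun x => exists U, In U l /\ U x).

Definition inQ (A : T -> Prop) : Prop := (exists x, A x) /\ compact A /\ saturated A.

Definition upF (l : list T) : T -> Prop := fun x => exists y, In y l /\ spec_le y x.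

Definition strongly_compact (A : T -> Prop) : Prop :=
  forall U, open U -> subset A U ->
    exists l : list T, subset A (upF l) /\ subset (upF l) U.

Definition inQs (A : T -> Prop) : Prop :=
  (exists x, A x) /\ strongly_compact A /\ saturated A.

Definition filtered (K : (T -> Prop) -> Prop) : Prop :=
  (exists A, K A) /\
  forall A B, K A -> K B ->
    exists C, K C /\ subset C A /\ subset C B.

Definition bigcap (K : (T -> Prop) -> Prop) : T -> Prop :=
  fun x => forall A, K A -> A x.

Definition well_filtered : Prop :=
  forall U (K : (T -> Prop) -> Prop),
    open U -> (forall A, K A -> inQ A) -> filtered K ->
    subset (bigcap K) U -> exists A, K A /\ subset A U.

Definition s_well_filtered : Prop :=
  forall U (K : (T -> Prop) -> Prop),
    open U -> (forall A, K A -> inQs A) -> filtered K ->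
    subset (bigcap K) U -> exists A, K A /\ subset A U.

Definition meets (A B : T -> Prop) : Prop := exists x, A x /\ B x.

Definition minimal_closed_meeting (K : (T -> Prop) -> Prop) (C : T -> Prop) : Prop :=
  closed C /\ (forall A, K A -> meets C A) /\
  forall B, closed B -> subset B C -> (forall A, K A -> meets B A) -> subset C B.

Definition rudin (A : T -> Prop) : Prop :=
  (exists x, A x) /\
  exists K : (T -> Prop) -> Prop,
    (forall Q, K Q -> inQ Q) /\ filtered K /\ minimal_closed_meeting K (closure A).

End Topo.

Definition cof_open (U : nat -> Prop) : Prop :=
  (forall x, ~ U x) \/ exists l : list nat, forall x, U x <-> ~ In x l.

(* In the co-finite topology on an infinite set the closed sets are the finite
   sets and the whole space, so the specialization order is discrete: the space
   is trivially a d-space, every subset is compact and saturated, and the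
   strongly compact sets are exactly the finite ones.  A filtered family
   containing a finite member has a member inside its intersection, which
   gives s-well-filteredness.  The tails [{x | n <= x}] form a filtered family
   of compact saturated sets with empty intersection, so the space is not
   well-filtered; they also witness that the whole space is a Rudin set, since
   a closed set meeting every tail is infinite.  A finite closed Rudin set
   contains a point of the intersection of its family and therefore, by
   minimality, is that singleton. *)
From Stdlib Require Import List Classical Lia FunctionalExtensionality PropExtensionality.
Import ListNotations.

Lemma pred_ext {T : Type} (A B : T -> Prop) : (forall x, A x <-> B x) -> A = B.
Proof.
  intro HAB. apply functional_extensionality. intro x.
  now apply propositional_extensionality.
Qed.

Section General.
Variables (T : Type) (open : (T -> Prop) -> Prop).

Lemma spec_le_refl x : spec_le T open x x.
Proof. intros C _ HC. now apply HC. Qed.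

Lemma closure_closed A : closed T open A -> closure T open A = A.
Proof.
  intro HA. apply pred_ext. intro x. split.
  - intro Hx. apply Hx; [exact HA | intros y Hy; exact Hy].
  - intros Hx C _ HC. now apply HC.
Qed.

Lemma cover_on_list (A : T -> Prop) (F : (T -> Prop) -> Prop) (m : list T) :
  subset T A (fun x => exists U, F U /\ U x) ->
  exists l, (forall U, In U l -> F U) /\
            forall x, In x m -> A x -> exists U, In U l /\ U x.
Proof.
  intro Hcov. induction m as [|y m [l [HlF Hlm]]].
  - exists []. split; [intros U [] | intros x []].
  - destruct (classic (A y)) as [Hy|Hy].
    + destruct (Hcov y Hy) as [U [HU HUy]].
      exists (U :: l). split.
      * intros V [<-|HV]; auto.
      * intros x [<-|Hx] HAx; [exists U; simpl; auto|].
        destruct (Hlm x Hx HAx) as [V [HV HVx]]. exists V. simpl. auto.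
    + exists l. split; [exact HlF|].
      intros x [<-|Hx] HAx; [contradiction | exact (Hlm x Hx HAx)].
Qed.

Lemma filtered_bigcap_on_list K : filtered T K ->
  forall l, exists C, K C /\ forall y, In y l -> C y -> bigcap T K y.
Proof.
  intros [[A0 HA0] Hdown] l. induction l as [|y l [C [HC HCl]]].
  - exists A0. split; [exact HA0 | intros y []].
  - destruct (classic (bigcap T K y)) as [Hy|Hy].
    + exists C. split; [exact HC|]. intros z [<-|Hz] HCz; auto.
    + apply not_all_ex_not in Hy as [A HA].
      apply imply_to_and in HA as [HKA HAy].
      destruct (Hdown C A HC HKA) as [D [HD [HDC HDA]]].
      exists D. split; [exact HD|].
      intros z [<-|Hz] HDz.
      * exfalso. exact (HAy (HDA _ HDz)).
      * exact (HCl z Hz (HDC _ HDz)).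
Qed.

Lemma filtered_finite_member_bigcap K A0 l :
  filtered T K -> K A0 -> (forall x, A0 x -> In x l) ->
  exists D, K D /\ subset T D (bigcap T K).
Proof.
  intros HK HA0 HA0l.
  destruct (filtered_bigcap_on_list K HK l) as [C [HC HCl]].
  destruct (proj2 HK C A0 HC HA0) as [D [HD [HDC HDA0]]].
  exists D. split; [exact HD|].
  intros x HDx. exact (HCl x (HA0l x (HDA0 x HDx)) (HDC x HDx)).
Qed.

Lemma minimal_closed_meeting_point K C z :
  minimal_closed_meeting T open K C -> closed T open (fun x => x = z) ->
  C z -> bigcap T K z -> forall x, C x <-> x = z.
Proof.
  intros [_ [_ Hmin]] Hz HCz HKz x. split.
  - apply (Hmin (fun y => y = z)); [exact Hz | now intros y -> |].
    intros A HA. exists z. split; [reflexivity | exact (HKz A HA)].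
  - now intros ->.
Qed.

End General.

Local Notation cof_closed := (closed nat cof_open).

Lemma cof_open_cofinite l : cof_open (fun x => ~ In x l).
Proof. right. exists l. reflexivity. Qed.

Lemma cof_open_full : cof_open (fun _ => True).
Proof. right. exists []. simpl. tauto. Qed.

Lemma cof_closed_finite l : cof_closed (fun x => In x l).
Proof. exact (cof_open_cofinite l). Qed.

Lemma cof_closed_singleton n : cof_closed (fun x => x = n).
Proof.
  replace (fun x => x = n) with (fun x => In x [n]); [apply cof_closed_finite|].
  apply pred_ext. simpl. intuition.
Qed.

Lemma cof_closed_cases A : cof_closed A ->
  (forall x, A x) \/ exists l, forall x, A x <-> In x l.
Proof.
  intros [Hall|[l Hl]].
  - left. intro x. exact (NNPP _ (Hall x)).
  - right. exists l. intro x. specialize (Hl x).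
    destruct (classic (A x)), (classic (In x l)); tauto.
Qed.

Lemma cof_spec_le_eq x y : spec_le nat cof_open x y -> x = y.
Proof. intro H. apply H; [apply cof_closed_singleton | now intros z]. Qed.

Lemma cof_compact A : compact nat cof_open A.
Proof.
  intros F HF Hcov.
  destruct (classic (exists x, A x)) as [[x0 Hx0]|Hempty].
  2:{ exists []. split; [intros U [] | intros x Hx; exfalso; eauto]. }
  destruct (Hcov x0 Hx0) as [U0 [HU0 HU0x0]].
  destruct (HF U0 HU0) as [HU0empty|[m Hm]]; [now exfalso; apply (HU0empty x0)|].
  (* [U0] misses only the finite set [m], which [cover_on_list] handles. *)
  destruct (cover_on_list nat A F m Hcov) as [l [HlF Hlm]].
  exists (U0 :: l). split; [intros U [<-|HU]; auto|].
  intros x Hx. destruct (classic (In x m)) as [Hxm|Hxm].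
  - destruct (Hlm x Hxm Hx) as [V [HV HVx]]. exists V. simpl. auto.
  - exists U0. split; [now left | now apply Hm].
Qed.

Lemma cof_saturated A : saturated nat cof_open A.
Proof.
  intros x Hx. apply NNPP. intro HAx.
  apply (Hx (fun z => ~ In z [x]) (cof_open_cofinite [x])); [|now left].
  intros z HAz [->|[]]. exact (HAx HAz).
Qed.

Lemma cof_inQ A : (exists x, A x) -> inQ nat cof_open A.
Proof. intro HA. exact (conj HA (conj (cof_compact A) (cof_saturated A))). Qed.

Lemma cof_strongly_compact_finite A :
  strongly_compact nat cof_open A -> exists l, forall x, A x -> In x l.
Proof.
  intro HA. destruct (HA _ cof_open_full) as [l [Hl _]]; [now intros x|].
  exists l. intros x Hx. destruct (Hl x Hx) as [y [Hy Hyx]].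
  now rewrite <- (cof_spec_le_eq _ _ Hyx).
Qed.

Definition tails (Q : nat -> Prop) : Prop := exists n, Q = (fun x => n <= x).

Lemma tails_inQ Q : tails Q -> inQ nat cof_open Q.
Proof. intros [n ->]. apply cof_inQ. now exists n. Qed.

Lemma tails_filtered : filtered nat tails.
Proof.
  split; [now exists (fun x => 0 <= x), 0|].
  intros Q1 Q2 [n1 ->] [n2 ->]. exists (fun x => max n1 n2 <= x).
  split; [now exists (max n1 n2)|]. split; intros x Hx; simpl; lia.
Qed.

Lemma bigcap_tails_empty x : ~ bigcap nat tails x.
Proof. intro Hx. specialize (Hx _ (ex_intro _ (S x) eq_refl)). simpl in Hx. lia. Qed.

Lemma cof_closed_meeting_tails B : cof_closed B ->
  (forall Q, tails Q -> meets nat B Q) -> forall x, B x.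
Proof.
  intros HB Hmeet. destruct (cof_closed_cases B HB) as [Hall|[l Hl]]; [exact Hall|].
  exfalso.
  destruct (Hmeet (fun x => S (list_max l) <= x)) as [y [HBy Hly]]; [now eexists|].
  assert (Hle : list_max l <= list_max l) by reflexivity.
  apply list_max_le, Forall_forall with (x := y) in Hle; [lia | now apply Hl].
Qed.

Lemma cof_rudin_full A : (forall x, A x) -> rudin nat cof_open A.
Proof.
  intro HA.
  assert (HAcl : cof_closed A) by (left; intros x Hx; exact (Hx (HA x))).
  split; [now exists 0|]. exists tails.
  split; [exact tails_inQ|]. split; [exact tails_filtered|].
  rewrite (closure_closed _ _ _ HAcl).
  split; [exact HAcl|]. split.
  - intros Q [n ->]. exists n. split; [apply HA | simpl; lia].
  - intros B HB _ Hmeet x _. exact (cof_closed_meeting_tails B HB Hmeet x).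
Qed.

Lemma cof_rudin_singleton n : rudin nat cof_open (fun x => x = n).
Proof.
  split; [now exists n|]. exists (fun Q => Q = (fun x => x = n)).
  split; [intros Q ->; apply cof_inQ; now exists n|].
  split.
  { split; [now eexists|]. intros Q1 Q2 -> ->. now exists (fun x => x = n). }
  rewrite (closure_closed _ _ _ (cof_closed_singleton n)).
  split; [apply cof_closed_singleton|]. split.
  - intros Q ->. now exists n.
  - intros B _ _ Hmeet x ->.
    destruct (Hmeet _ eq_refl) as [y [HBy ->]]. exact HBy.
Qed.

Lemma cof_closed_rudin_cases A : cof_closed A -> rudin nat cof_open A ->
  (forall x, A x) \/ exists n, forall x, A x <-> x = n.
Proof.
  intros HAcl [_ [K [_ [HK Hmin]]]].
  rewrite (closure_closed _ _ _ HAcl) in Hmin.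
  destruct (cof_closed_cases A HAcl) as [Hall|[l Hl]]; [now left|right].
  destruct (filtered_bigcap_on_list nat K HK l) as [C [HC HCl]].
  destruct (proj1 (proj2 Hmin) C HC) as [z [HAz HCz]].
  exists z. apply (minimal_closed_meeting_point nat cof_open K);
    [exact Hmin | apply cof_closed_singleton | exact HAz|].
  exact (HCl z (proj1 (Hl z) HAz) HCz).
Qed.

Lemma cof_d_space : d_space nat cof_open.
Proof.
  split; [intros x y Hxy _; exact (cof_spec_le_eq x y Hxy)|]. split.
  - intros D [[x Hx] Hdir]. exists x. split.
    + intros y Hy. destruct (Hdir y x Hy Hx) as [z [_ [Hyz Hxz]]].
      rewrite (cof_spec_le_eq _ _ Hyz), <- (cof_spec_le_eq _ _ Hxz).
      apply spec_le_refl.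
    + intros u Hu. exact (Hu x Hx).
  - intros U _. split.
    + intros x y Hx Hxy. now rewrite <- (cof_spec_le_eq _ _ Hxy).
    + intros D s [[x Hx] _] [Hs _] HUs. exists x.
      split; [exact Hx|]. now rewrite (cof_spec_le_eq _ _ (Hs x Hx)).
Qed.

Lemma cof_s_well_filtered : s_well_filtered nat cof_open.
Proof.
  intros U K _ HKQs HK HKU.
  destruct (proj1 HK) as [A0 HA0].
  destruct (cof_strongly_compact_finite A0 (proj1 (proj2 (HKQs A0 HA0)))) as [l Hl].
  destruct (filtered_finite_member_bigcap nat K A0 l HK HA0 Hl) as [D [HD HDK]].
  exists D. split; [exact HD|]. intros x HDx. exact (HKU x (HDK x HDx)).
Qed.

Lemma cof_not_well_filtered : ~ well_filtered nat cof_open.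
Proof.
  intro Hwf.
  destruct (Hwf (fun _ => False) tails) as [Q [[n ->] HQ]].
  - now left.
  - exact tails_inQ.
  - exact tails_filtered.
  - intros x Hx. exact (bigcap_tails_empty x Hx).
  - exact (HQ n (le_n n)).
Qed.

Theorem mainTheorem2 :
  d_space nat cof_open /\
  s_well_filtered nat cof_open /\
  (forall A : nat -> Prop,
     (closed nat cof_open A /\ rudin nat cof_open A) <->
     ((forall x, A x) \/ exists n, forall x, A x <-> x = n)) /\
  ~ well_filtered nat cof_open.
Proof.
  split; [exact cof_d_space|]. split; [exact cof_s_well_filtered|].
  split; [|exact cof_not_well_filtered].
  intro A. split.
  - intros [HAcl HA]. exact (cof_closed_rudin_cases A HAcl HA).
  - intros [Hall|[n Hn]].
    + split; [left; intros x Hx; exact (Hx (Hall x)) | exact (cof_rudin_full A Hall)].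
    + replace A with (fun x => x = n) by (symmetry; exact (pred_ext _ _ Hn)).
      exact (conj (cof_closed_singleton n) (cof_rudin_singleton n)).
Qed.
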